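(* Let $\mathcal{A}$ and $\mathcal{B}$ be nice GFG-tNCWs with $L(\mathcal{A})=L(\mathcal{B})$, each minimal (i.e., no GFG-tNCW recognizing the same language has fewer states). Then $\mathcal{A}$ and $\mathcal{B}$ are safe isomorphic.
   Context: A tNCW is $\mathcal{A}=\langle\Sigma,Q,q_0,\delta,\alpha\rangle$: finite alphabet $\Sigma$, finite state set $Q$, initial state $q_0$, transition function $\delta:Q\times\Sigma\to 2^Q\setminus\{\emptyset\}$ with transition relation $\Delta=\{\langle q,\sigma,s\rangle:s\in\delta(q,\sigma)\}$, and $\alpha\subseteq\Delta$; $|\mathcal{A}|=|Q|$. $\alpha$-transitions are those in $\alpha$, $\bar\alpha$-transitions those in $\Delta\setminus\alpha$; $\delta^{\alpha}(q,\sigma)$ and $\delta^{\bar\alpha}(q,\sigma)$ are the sets of $\sigma$-successors of $q$ via $\alpha$-, resp. $\bar\alpha$-transitions. A run on $w=\sigma_1\sigma_2\cdots$ is $r_0r_1\cdots$ with $r_0=q_0$, $r_{i+1}\in\delta(r_i,\sigma_{i+1})$; it is accepting iff it traverses $\alpha$-transitions only finitely often; $L(\mathcal{A})$ is the accepted language. $\mathcal{A}^q$ is $\mathcal{A}$ with initial state $q$; $q\sim s$ iff $L(\mathcal{A}^q)=L(\mathcal{A}^s)$. $\mathcal{A}$ is GFG if there is $f:\Sigma^*\to Q$ with $f(\epsilon)=q_0$, $\langle f(u),\sigma,f(u\sigma)\rangle\in\Delta$ for all $u,\sigma$, and for every $w\in L(\mathcal{A})$ the run $f(w[1,0]),f(w[1,1]),\dots$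 is accepting; state $q$ is GFG if $\mathcal{A}^q$ is. $\mathcal{A}$ is semantically deterministic if all $\sigma$-successors of any state are pairwise $\sim$-equivalent; safe deterministic if $|\delta^{\bar\alpha}(q,\sigma)|\le1$ always; normal if whenever a path of $\bar\alpha$-transitions leads from $q$ to $s$, one also leads from $s$ to $q$. $\mathcal{A}$ is nice if all states are reachable and GFG and $\mathcal{A}$ is normal, safe deterministic and semantically deterministic. For tNCWs $\mathcal{A},\mathcal{B}$ over the same alphabet with state sets $Q_\mathcal{A},Q_\mathcal{B}$, a bijection $\kappa:Q_\mathcal{A}\to Q_\mathcal{B}$ is $\bar\alpha$-transition respecting if for all $q,q'\in Q_\mathcal{A}$ and $\sigma\in\Sigma$: $q'\in\delta^{\bar\alpha}_\mathcal{A}(q,\sigma)$ iff $\kappa(q')\in\delta^{\bar\alpha}_\mathcal{B}(\kappa(q),\sigma)$. $\mathcal{A}$ and $\mathcal{B}$ are safe isomorphic if such a bijection exists. *)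

From mathcomp Require Import all_boot.
Unset Implicit Arguments. Unset Printing Implicit Defensive.

(* Transition-based nondeterministic co-Buchi word automata (tNCW) over a
   finite alphabet Sigma. Infinite words are functions nat -> Sigma, with
   w i the (i+1)-th letter sigma_{i+1}. *)
Record tNCW (Sigma : finType) := TNCW {
  st : finType;
  init : st;
  delta : st -> Sigma -> {set st};
  delta_ne : forall q a, delta q a != set0;
  alpha : st -> Sigma -> st -> bool;
  alpha_sub : forall q a s, alpha q a s -> s \in delta q a
}.
Arguments init {Sigma} t.
Arguments delta {Sigma t}.
Arguments alpha {Sigma t}.
Arguments st {Sigma}.
Arguments delta_ne {Sigma}.
Arguments alpha_sub {Sigma}.

Section Defs.
Context {Sigma : finType}.
Implicit Types A B : tNCW Sigma.

Definition word := nat -> Sigma.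

Definition with_init {A} (q : st A) : tNCW Sigma :=
  @TNCW Sigma (st A) q (@delta _ A) (delta_ne A) (@alpha _ A) (alpha_sub A).

Definition is_run A (w : word) (r : nat -> st A) : Prop :=
  r 0 = init A /\ forall i, r i.+1 \in delta (r i) (w i).

Definition run_accepting A (w : word) (r : nat -> st A) : Prop :=
  exists N, forall i, N <= i -> ~~ alpha (r i) (w i) (r i.+1).

Definition accepts A (w : word) : Prop :=
  exists r, is_run A w r /\ run_accepting A w r.

Definition lang A : word -> Prop := accepts A.

Definition same_lang A B : Prop := forall w, accepts A w <-> accepts B w.

Definition equiv_st {A} (q s : st A) : Prop :=
  same_lang (with_init q) (with_init s).

Definition prefix (w : word) (i : nat) : seq Sigma := mkseq w i.

Definition GFG A : Prop :=
  exists f : seq Sigma -> st A,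
    f [::] = init A /\
    (forall u (a : Sigma), f (rcons u a) \in delta (f u) a) /\
    (forall w, accepts A w -> run_accepting A w (fun i => f (prefix w i))).

Definition GFG_state {A} (q : st A) : Prop := GFG (with_init q).

Definition semantically_deterministic A : Prop :=
  forall (q : st A) a (s s' : st A), s \in delta q a -> s' \in delta q a -> equiv_st s s'.

Definition safe_deterministic A : Prop :=
  forall (q : st A) a, #|[set s in @delta _ A q a | ~~ alpha q a s]| <= 1.

Definition trans_rel A : rel (st A) :=
  fun (q s : st A) => [exists a, s \in delta q a].

Definition safe_rel A : rel (st A) :=
  fun (q s : st A) => [exists a, (s \in delta q a) && ~~ alpha q a s].

Definition normal A : Prop :=
  forall q s : st A, connect (@safe_rel A) q s -> connect (@safe_rel A) s q.

Definition all_reachable A : Prop :=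
  forall q : st A, connect (@trans_rel A) (init A) q.

Definition nice A : Prop :=
  [/\ all_reachable A, (forall q : st A, GFG_state q),
      normal A, safe_deterministic A & semantically_deterministic A].

Definition minimal_GFG A : Prop :=
  forall C : tNCW Sigma, GFG C -> same_lang C A -> #|st A| <= #|st C|.

Definition safe_respecting {A B} (k : st A -> st B) : Prop :=
  forall (q q' : st A) (a : Sigma),
    ((q' \in delta q a) && ~~ alpha q a q') =
    ((k q' \in delta (k q) a) && ~~ alpha (k q) a (k q')).

Definition safe_isomorphic A B : Prop :=
  exists k : st A -> st B, bijective k /\ safe_respecting k.

End Defs.

(* For states q and s, possibly of different automata, write q ⊑ s
   ([subsafe q s]) when they have the same language and every word read from q
   along safe transitions is also read safely from s.  In a minimal GFG-tNCW,
   ⊑ is antisymmetric, and q ⊑ s forces s to be safely reachable from q: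
   otherwise deleting a suitable set of states and redirecting the transitions
   entering it ([contract]) gives a smaller GFG automaton for the same
   language.  If A and B are nice and equivalent, every state q of A is ⊑ some
   state of B: otherwise, after every safe loop at q, some safe word from q is
   not safe from the state reached by the GFG strategy of B, and gluing these
   words with safe returns to q gives a word that A accepts while the strategy
   takes rejecting transitions infinitely often.  Iterating the two covering
   maps, the pigeonhole principle gives for each state of A a state of B that
   is ⊑ in both directions ([strong_equiv]); this map is injective, hence
   bijective by minimality, and respects safe transitions because safe
   successors preserve [strong_equiv]. *)

From mathcomp Require Import all_boot.
From Pilot Require Import Defs.
From mathcomp Require Import boolp.

Set Implicit Arguments.
Unset Strict Implicit.

Section Acceptance.
Context {Sigma : finType}.
Local Notation word := (@word Sigma).
Implicit Types (X Y Z : tNCW Sigma) (w : word).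

Definition wdrop (m : nat) (w : word) : word := fun n => w (m + n).

Lemma wdropD m n w : wdrop n (wdrop m w) =1 wdrop (m + n) w.
Proof. by move=> i; rewrite /wdrop addnA. Qed.

Lemma prefixS w n : Defs.prefix w n.+1 = rcons (Defs.prefix w n) (w n).
Proof. exact: mkseqS. Qed.

Lemma accepts_ext X w w' : w =1 w' -> accepts X w -> accepts X w'.
Proof.
move=> E [r [[r0 rs] [N HN]]]; exists r; split; [split|exists N] => // i.
  by rewrite -E.
by rewrite -E; apply: HN.
Qed.

Lemma accepts_cons X (x y : st X) w :
  y \in delta x (w 0) -> accepts (with_init y) (wdrop 1 w) ->
  accepts (with_init x) w.
Proof.
move=> xy [r [[r0 rs] [N HN]]].
exists (fun n => if n is m.+1 then r m else x); split; first split => //.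
  by case=> [|i] /=; [rewrite r0 | apply: rs].
by exists N.+1 => -[|i] //= /HN.
Qed.

Lemma accepts_uncons X (x : st X) w : accepts (with_init x) w ->
  exists2 y, y \in delta x (w 0) & accepts (with_init y) (wdrop 1 w).
Proof.
move=> [r [[r0 rs] [N HN]]]; exists (r 1); first by have := rs 0; rewrite r0.
exists (fun n => r n.+1); split; first by split => // i; apply: rs.
by exists N => i Hi; apply: HN; apply: leqW.
Qed.

Definition lang_eq X Y (x : st X) (y : st Y) :=
  same_lang (with_init x) (with_init y).

Lemma lang_eq_refl X (x : st X) : lang_eq x x.
Proof. by []. Qed.

Lemma lang_eq_sym X Y (x : st X) (y : st Y) : lang_eq x y -> lang_eq y x.
Proof. by move=> E w; rewrite E. Qed.

Lemma lang_eq_trans X Y Z (x : st X) (y : st Y) (z : st Z) :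
  lang_eq x y -> lang_eq y z -> lang_eq x z.
Proof. by move=> E1 E2 w; rewrite E1 E2. Qed.

Lemma sdet_accepts_cons X (x y : st X) w : semantically_deterministic X ->
  y \in delta x (w 0) ->
  accepts (with_init x) w <-> accepts (with_init y) (wdrop 1 w).
Proof.
move=> sdX xy; split; last exact: accepts_cons.
by case/accepts_uncons => y' xy' /(sdX _ _ _ _ xy' xy).
Qed.

Lemma sdet_accepts_shift X (x y : st X) w m : semantically_deterministic X ->
  y \in delta x (w m) ->
  accepts (with_init x) (wdrop m w) <-> accepts (with_init y) (wdrop m.+1 w).
Proof.
move=> sdX xy; have xy0 : y \in delta x (wdrop m w 0) by rewrite /wdrop addn0.
rewrite (sdet_accepts_cons sdX xy0).
by split; apply: accepts_ext => n; rewrite wdropD addn1.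
Qed.

Lemma lang_eq_succ X Y (x : st X) (y : st Y) a x' y' :
  semantically_deterministic X -> semantically_deterministic Y ->
  lang_eq x y -> x' \in delta x a -> y' \in delta y a -> lang_eq x' y'.
Proof.
move=> sdX sdY E xx' yy' w.
pose aw : word := fun n => if n is m.+1 then w m else a.
have := E aw.
by rewrite (sdet_accepts_cons (w := aw) sdX xx') (sdet_accepts_cons (w := aw) sdY yy').
Qed.

End Acceptance.

Section Reading.
Context {Sigma : finType}.
Local Notation word := (@word Sigma).
Implicit Types (X Y : tNCW Sigma) (w : word) (u v : seq Sigma).

Fixpoint reads X (x : st X) u (y : st X) : Prop :=
  if u is a :: u' then exists2 z, z \in delta x a & reads z u' y else x = y.

Lemma reads_cat X (x z : st X) u v :
  reads x (u ++ v) z <-> exists2 y, reads x u y & reads y v z.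
Proof.
elim: u x => [|a u IH] x /=; first by split => [|[y <-]]; first exists x.
split=> [[x1 xx1 /IH [y x1y yz]]|[y [x1 xx1 x1y] yz]].
  by exists y => //; exists x1.
by exists x1 => //; apply/IH; exists y.
Qed.

Lemma reads_rcons X (x z : st X) u a :
  reads x (rcons u a) z <-> exists2 y, reads x u y & z \in delta y a.
Proof.
rewrite -cats1 reads_cat.
by split=> [[y xy [z' yz' <-]]|[y xy yz]]; exists y => //; exists z.
Qed.

Lemma lang_eq_reads X Y (x : st X) (y : st Y) u x' y' :
  semantically_deterministic X -> semantically_deterministic Y ->
  lang_eq x y -> reads x u x' -> reads y u y' -> lang_eq x' y'.
Proof.
move=> sdX sdY; elim: u x y => [|a u IH] x y E /=; first by move=> <- <-.
move=> [x1 xx1 x1x'] [y1 yy1 y1y'].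
exact: IH (lang_eq_succ sdX sdY E xx1 yy1) x1x' y1y'.
Qed.

Lemma strategy_reads X (f : seq Sigma -> st X) :
  f [::] = init X -> (forall u a, f (rcons u a) \in delta (f u) a) ->
  forall u, reads (init X) u (f u).
Proof.
move=> f0 fS; elim/last_ind => [|u a IH] /=; first by rewrite f0.
by apply/reads_rcons; exists (f u).
Qed.

Lemma connect_reads X (x y : st X) :
  connect (trans_rel X) x y -> exists u, reads x u y.
Proof.
move/connectP => [p Hp ->]; elim: p x Hp => [|x1 p IH] x /=; first by exists [::].
by case/andP => /existsP [a xx1] /IH [u Hu]; exists (a :: u); exists x1.
Qed.

Lemma accepts_prefix_reads X (x y : st X) w m :
  reads x (Defs.prefix w m) y -> accepts (with_init y) (wdrop m w) ->
  accepts (with_init x) w.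
Proof.
elim: m y => [|m IH] y.
  by move=> -> Hy; apply: accepts_ext Hy => n.
rewrite prefixS => /reads_rcons [z xz zy] Hy; apply: IH xz _.
apply: (accepts_cons (y := y)); first by rewrite /wdrop addn0.
by apply: accepts_ext Hy => n; rewrite wdropD addn1.
Qed.

End Reading.

Section SafeReading.
Context {Sigma : finType}.
Local Notation word := (@word Sigma).
Implicit Types (X Y Z : tNCW Sigma) (w : word) (u v : seq Sigma).

Definition safe_trans X (x : st X) a (y : st X) : bool :=
  (y \in delta x a) && ~~ alpha x a y.

Definition safe_succ X (x : st X) a : option (st X) := [pick y | safe_trans x a y].

Fixpoint safe_read X (x : st X) u : option (st X) :=
  if u is a :: u' then obind (fun y => safe_read y u') (safe_succ x a) else Some x.

Lemma safe_succ_trans X (x y : st X) a : safe_succ x a = Some y -> safe_trans x a y.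
Proof. by rewrite /safe_succ; case: pickP => // y' xy' [<-]. Qed.

Lemma safe_trans_succ X (x y : st X) a : safe_deterministic X ->
  safe_trans x a y -> safe_succ x a = Some y.
Proof.
move=> sdX xy; rewrite /safe_succ; case: pickP => [y' xy'|/(_ y)]; last by rewrite xy.
have /card_le1_eqP eq_succ := sdX x a.
by congr Some; apply: eq_succ; rewrite inE.
Qed.

Lemma safe_read_cat X (x : st X) u v :
  safe_read x (u ++ v) = obind (fun y => safe_read y v) (safe_read x u).
Proof. by elim: u x => [|a u IH] x //=; case: (safe_succ x a). Qed.

Lemma safe_read_rcons X (x : st X) u a :
  safe_read x (rcons u a) = obind (fun y => safe_succ y a) (safe_read x u).
Proof.
by rewrite -cats1 safe_read_cat; case: (safe_read x u) => //= y; case: safe_succ.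
Qed.

Lemma safe_read_catl X (x : st X) u v :
  safe_read x (u ++ v) != None -> safe_read x u != None.
Proof. by rewrite safe_read_cat; case: (safe_read x u). Qed.

Lemma safe_read_reads X (x y : st X) u : safe_read x u = Some y -> reads x u y.
Proof.
elim: u x => [|a u IH] x /=; first by case.
case E: (safe_succ x a) => [x1|] //= /IH x1y; exists x1 => //.
by case/andP: (safe_succ_trans E).
Qed.

Lemma safe_read_connect X (x y : st X) u :
  safe_read x u = Some y -> connect (safe_rel X) x y.
Proof.
elim: u x => [|a u IH] x /=; first by case=> ->.
case E: (safe_succ x a) => [x1|] //= /IH; apply: connect_trans.
by apply: connect1; apply/existsP; exists a; apply: safe_succ_trans.
Qed.

Lemma connect_safe_read X (x y : st X) : safe_deterministic X ->
  connect (safe_rel X) x y -> exists u, safe_read x u = Some y.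
Proof.
move=> sdX /connectP [p Hp ->]; elim: p x Hp => [|x1 p IH] x /=; first by exists [::].
case/andP => /existsP [a xx1] /IH [u Hu].
by exists (a :: u); rewrite /= (safe_trans_succ sdX xx1).
Qed.

Lemma safe_read_accepts X (x : st X) w :
  (forall n, safe_read x (Defs.prefix w n) != None) -> accepts (with_init x) w.
Proof.
move=> Hw; pose r n := odflt x (safe_read x (Defs.prefix w n)).
have r_safe n : safe_trans (r n) (w n) (r n.+1).
  have := Hw n.+1; rewrite /r prefixS safe_read_rcons.
  case: (safe_read x _) => //= y; case E: (safe_succ y (w n)) => //= _.
  exact: safe_succ_trans.
exists r; split; first split => // i; first by case/andP: (r_safe i).
by exists 0 => i _; case/andP: (r_safe i).
Qed.

Lemma safe_run_read X (r : nat -> st X) w m : safe_deterministic X ->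
  (forall i, m <= i -> safe_trans (r i) (w i) (r i.+1)) ->
  forall n, safe_read (r m) (Defs.prefix (wdrop m w) n) = Some (r (m + n)).
Proof.
move=> sdX r_safe; elim=> [|n IH]; first by rewrite addn0.
rewrite prefixS safe_read_rcons IH /= addnS.
exact/safe_trans_succ/r_safe/leq_addr.
Qed.

Lemma run_safe_from X w (r : nat -> st X) :
  (forall i, r i.+1 \in delta (r i) (w i)) -> run_accepting X w r ->
  exists N, forall i, N <= i -> safe_trans (r i) (w i) (r i.+1).
Proof. by move=> rS [N HN]; exists N => i /HN; rewrite /safe_trans rS. Qed.

Definition safe_incl X Y (x : st X) (y : st Y) :=
  forall u, safe_read x u != None -> safe_read y u != None.

Definition subsafe X Y (x : st X) (y : st Y) := lang_eq x y /\ safe_incl x y.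

Definition strong_equiv X Y (x : st X) (y : st Y) := subsafe x y /\ subsafe y x.

Lemma safe_incl_trans X Y Z (x : st X) (y : st Y) (z : st Z) :
  safe_incl x y -> safe_incl y z -> safe_incl x z.
Proof. by move=> xy yz u /xy /yz. Qed.

Lemma safe_incl_succ X Y (x x' : st X) (y : st Y) a :
  safe_incl x y -> safe_succ x a = Some x' ->
  exists2 y', safe_succ y a = Some y' & safe_incl x' y'.
Proof.
move=> xy Ex; case Ey: (safe_succ y a) => [y'|].
  by exists y' => // u; have := xy (a :: u); rewrite /= Ex Ey.
by have := xy [:: a]; rewrite /= Ex Ey => /(_ isT).
Qed.

Lemma subsafe_refl X (x : st X) : subsafe x x.
Proof. by split; first exact: lang_eq_refl. Qed.

Lemma subsafe_trans X Y Z (x : st X) (y : st Y) (z : st Z) :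
  subsafe x y -> subsafe y z -> subsafe x z.
Proof.
move=> [E1 S1] [E2 S2].
by split; [apply: lang_eq_trans E1 E2 | apply: safe_incl_trans S1 S2].
Qed.

Lemma subsafe_succ X Y (x x' : st X) (y : st Y) a :
  semantically_deterministic X -> semantically_deterministic Y ->
  subsafe x y -> safe_succ x a = Some x' ->
  exists2 y', safe_succ y a = Some y' & subsafe x' y'.
Proof.
move=> sdX sdY [E S] Ex; have [y' Ey S'] := safe_incl_succ S Ex.
exists y' => //; split => //.
have /andP [xx' _] := safe_succ_trans Ex; have /andP [yy' _] := safe_succ_trans Ey.
exact: lang_eq_succ sdX sdY E xx' yy'.
Qed.

Lemma subsafe_read X Y (x x' : st X) (y : st Y) u :
  semantically_deterministic X -> semantically_deterministic Y ->
  subsafe x y -> safe_read x u = Some x' ->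
  exists2 y', safe_read y u = Some y' & subsafe x' y'.
Proof.
move=> sdX sdY; elim: u x y => [|a u IH] x y /=; first by move=> xy [<-]; exists y.
move=> xy; case Ex: (safe_succ x a) => [x1|] //= Hx1.
by have [y1 -> /IH] := subsafe_succ sdX sdY xy Ex; apply.
Qed.

Lemma strong_equiv_succ X Y (x x' : st X) (y : st Y) a :
  semantically_deterministic X -> semantically_deterministic Y ->
  strong_equiv x y -> safe_succ x a = Some x' ->
  exists2 y', safe_succ y a = Some y' & strong_equiv x' y'.
Proof.
move=> sdX sdY [xy yx] Ex; have [y' Ey x'y'] := subsafe_succ sdX sdY xy Ex.
have [x'' Ex' y'x''] := subsafe_succ sdY sdX yx Ey.
by move: Ex'; rewrite Ex => -[x'E]; subst x''; exists y'.
Qed.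

Lemma strong_equiv_sym X Y (x : st X) (y : st Y) :
  strong_equiv x y -> strong_equiv y x.
Proof. by case. Qed.

Lemma strong_equiv_trans X Y Z (x : st X) (y : st Y) (z : st Z) :
  strong_equiv x y -> strong_equiv y z -> strong_equiv x z.
Proof.
by move=> [xy yx] [yz zy]; split; [apply: subsafe_trans yz | apply: subsafe_trans yx].
Qed.

End SafeReading.

Section Contraction.
Context {Sigma : finType}.
Variable A : tNCW Sigma.
Hypotheses (sdA : semantically_deterministic A) (safedA : safe_deterministic A).
Variables (R : {set st A}) (y : st A -> st A).
Hypotheses (y_notin : forall x, x \in R -> y x \notin R)
  (subsafe_y : forall x, x \in R -> subsafe x (y x))
  (safe_incl_entry : forall r x a, r \notin R -> x \in R -> safe_trans r a x ->
     safe_incl (y x) x).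

Definition redirect x := if x \in R then y x else x.

Lemma redirect_notin x : redirect x \notin R.
Proof. by rewrite /redirect; case: ifP => [/y_notin|/negbT]. Qed.

Lemma subsafe_redirect x : subsafe x (redirect x).
Proof. by rewrite /redirect; case: ifP => [/subsafe_y|_] //; apply: subsafe_refl. Qed.

Lemma lang_eq_redirect x : lang_eq (redirect x) x.
Proof. exact/lang_eq_sym/(subsafe_redirect x).1. Qed.

(* [contract] deletes the states of [R]: safe transitions are those of [A]
   redirected by [y], and any transition may go to a state language-equivalent
   to an [A]-successor. *)
Definition contract_st : finType := {x : st A | x \notin R}.

Definition to_contract x : contract_st := exist _ (redirect x) (redirect_notin x).

Definition contract_delta (c : contract_st) a : {set contract_st} :=
  [set t | [exists s, (s \in delta (val c) a) && `[< lang_eq (val t) s >]]].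

Definition contract_safe (c : contract_st) a (t : contract_st) : bool :=
  [exists s, safe_trans (val c) a s && (redirect s == val t)].

Definition contract_alpha c a t :=
  (t \in contract_delta c a) && ~~ contract_safe c a t.

Lemma contract_delta_ne c a : contract_delta c a != set0.
Proof.
have /set0Pn [s cs] := delta_ne A (val c) a.
apply/set0Pn; exists (to_contract s); rewrite inE; apply/existsP; exists s.
by rewrite cs; apply/asboolP/lang_eq_redirect.
Qed.

Lemma contract_alpha_sub c a t : contract_alpha c a t -> t \in contract_delta c a.
Proof. by case/andP. Qed.

Definition contract : tNCW Sigma :=
  @TNCW Sigma contract_st (to_contract (init A)) contract_delta contract_delta_ne
    contract_alpha contract_alpha_sub.

Lemma contract_card : #|st contract| + #|R| = #|st A|.
Proof. by rewrite card_sig addnC -(cardC R); congr (_ + _); apply: eq_card. Qed.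

Lemma contract_safe_delta c a t : contract_safe c a t -> t \in contract_delta c a.
Proof.
case/existsP => s /andP [/andP [cs _] /eqP st]; rewrite inE; apply/existsP.
by exists s; rewrite cs -st; apply/asboolP/lang_eq_redirect.
Qed.

Lemma safe_trans_contract (c t : st contract) a :
  safe_trans c a t = contract_safe c a t.
Proof.
rewrite /safe_trans /= /contract_alpha.
by case: (boolP (contract_safe c a t)) => [/contract_safe_delta -> | _];
  rewrite /= ?andbT ?andbN.
Qed.

Lemma contract_safe_functional c a t t' :
  contract_safe c a t -> contract_safe c a t' -> t = t'.
Proof.
case/existsP => s /andP [cs /eqP st]; case/existsP => s' /andP [cs' /eqP s't'].
apply: val_inj; rewrite -st -s't'; congr redirect.
by apply: Some_inj; rewrite -(safe_trans_succ safedA cs) -(safe_trans_succ safedA cs').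
Qed.

Lemma contract_safe_det : safe_deterministic contract.
Proof.
move=> c a; apply/card_le1_eqP => t t'; rewrite in_set => ct; rewrite in_set => ct'.
by apply: (contract_safe_functional (c := c) (a := a)); rewrite -safe_trans_contract.
Qed.

Lemma contract_safe_step c a t : contract_safe c a t ->
  exists2 s, safe_trans (val c) a s & safe_incl (val t) s.
Proof.
case/existsP => s /andP [cs /eqP <-]; exists s => //.
rewrite /redirect; case: ifP => [sR|_ u] //.
exact: safe_incl_entry (valP c) sR cs.
Qed.

Lemma contract_safe_incl (c : st contract) : safe_incl c (val c).
Proof.
move=> u; elim: u c => [|a u IH] c //=.
case E: (safe_succ c a) => [t|] //= /IH.
have := safe_succ_trans E; rewrite safe_trans_contract.
by case/contract_safe_step => s /(safe_trans_succ safedA) -> /= ts /ts.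
Qed.

Lemma contract_run_lang w (r : nat -> st contract) : is_run contract w r ->
  forall i, accepts A w <-> accepts (with_init (val (r i))) (wdrop i w).
Proof.
move=> [r0 rS]; elim=> [|i IH].
  rewrite r0 (lang_eq_redirect (init A)).
  by split; apply: accepts_ext.
have := rS i; rewrite inE => /existsP [s /andP [rs /asboolP rs_eq]].
by rewrite IH (sdet_accepts_shift sdA rs) rs_eq.
Qed.

Lemma contract_accepts w : accepts contract w -> accepts A w.
Proof.
move=> [r [run acc]]; have [N rN] := run_safe_from run.2 acc.
apply/(contract_run_lang run N)/safe_read_accepts => n.
by apply: contract_safe_incl; rewrite (safe_run_read contract_safe_det rN).
Qed.

Section Strategy.
Variable f : seq Sigma -> st A.
Hypotheses (f0 : f [::] = init A) (fS : forall u a, f (rcons u a) \in delta (f u) a)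
  (f_acc : forall w, accepts A w -> run_accepting A w (fun i => f (Defs.prefix w i))).

Definition contract_next (c : st contract) a u : st contract :=
  odflt (to_contract (f u)) [pick t | contract_safe c a t].

Fixpoint contract_strategy_rev (ru : seq Sigma) : st contract :=
  if ru is a :: ru' then contract_next (contract_strategy_rev ru') a (rev ru)
  else to_contract (init A).

Definition contract_strategy u := contract_strategy_rev (rev u).
Local Notation g := contract_strategy.

Lemma contract_strategy_rcons u a : g (rcons u a) = contract_next (g u) a (rcons u a).
Proof. by rewrite /g rev_rcons /= rev_cons revK. Qed.

Lemma contract_strategy_lang_eq u : lang_eq (val (g u)) (f u).
Proof.
elim/last_ind: u => [|u a IH]; first by rewrite f0; apply: lang_eq_redirect.
rewrite contract_strategy_rcons /contract_next; case: pickP => [t|_] /=.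
  case/existsP => s /andP [/andP [gs _] /eqP <-].
  exact: lang_eq_trans (lang_eq_redirect s) (lang_eq_succ sdA sdA IH gs (fS u a)).
exact: lang_eq_redirect.
Qed.

Lemma contract_strategy_delta u a : g (rcons u a) \in contract_delta (g u) a.
Proof.
rewrite contract_strategy_rcons /contract_next.
case: pickP => [t /contract_safe_delta //|_].
have /set0Pn [s gs] := delta_ne A (val (g u)) a.
rewrite inE; apply/existsP; exists s; rewrite gs; apply/asboolP.
apply: lang_eq_trans (lang_eq_redirect _) _; apply: lang_eq_sym.
exact: lang_eq_succ sdA sdA (contract_strategy_lang_eq u) gs (fS u a).
Qed.

Lemma contract_strategy_unsafe u a :
  ~~ contract_safe (g u) a (g (rcons u a)) ->
  safe_incl (f (rcons u a)) (val (g (rcons u a))).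
Proof.
rewrite contract_strategy_rcons /contract_next; case: pickP => [t -> //|_ _] /=.
exact: (subsafe_redirect _).2.
Qed.

Lemma contract_strategy_safe u a :
  safe_trans (f u) a (f (rcons u a)) -> safe_incl (f u) (val (g u)) ->
  contract_safe (g u) a (g (rcons u a)) /\
  safe_incl (f (rcons u a)) (val (g (rcons u a))).
Proof.
move=> fsafe f_incl.
have [s Es fs_incl] := safe_incl_succ f_incl (safe_trans_succ safedA fsafe).
have gs : contract_safe (g u) a (to_contract s).
  by apply/existsP; exists s; rewrite (safe_succ_trans Es) /= eqxx.
have -> : g (rcons u a) = to_contract s.
  rewrite contract_strategy_rcons /contract_next.
  case: pickP => [t gt|/(_ (to_contract s))].
    exact: contract_safe_functional gt gs.
  by rewrite gs.
by split=> //; apply: safe_incl_trans fs_incl (subsafe_redirect s).2.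
Qed.

(* Once [f] only takes safe transitions, a single jump of [g] to [f]'s state
   makes [g]'s safe language contain [f]'s, and then [g] stays safe forever. *)
Lemma contract_strategy_accepting w : accepts A w ->
  run_accepting contract w (fun i => g (Defs.prefix w i)).
Proof.
have f_run i : f (Defs.prefix w i.+1) \in delta (f (Defs.prefix w i)) (w i).
  by rewrite prefixS.
move=> /f_acc /(run_safe_from f_run) [N fsafe].
pose P i := safe_incl (f (Defs.prefix w i)) (val (g (Defs.prefix w i))).
pose S i := contract_safe (g (Defs.prefix w i)) (w i) (g (Defs.prefix w i.+1)).
have PS i : N <= i -> P i -> P i.+1 /\ S i.
  by move=> /fsafe; rewrite /P /S !prefixS => /contract_strategy_safe H /H [].
have notSP i : ~~ S i -> P i.+1.
  by rewrite /P /S prefixS; apply: contract_strategy_unsafe.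
suff [M MS] : exists M, forall i, M <= i -> S i.
  by exists M => i /MS; rewrite /S /= /contract_alpha => ->; rewrite andbF.
case: (pselect (exists2 j, N <= j & P j)) => [[j Nj Pj]|noP].
  have Pj_ n : P (j + n).
    elim: n => [|n IH]; first by rewrite addn0.
    by rewrite addnS; apply: (PS _ (leq_trans Nj (leq_addr _ _)) IH).1.
  exists j => i /subnKC <-.
  exact: (PS _ (leq_trans Nj (leq_addr _ _)) (Pj_ _)).2.
exists N => i Ni; apply: contraT => /notSP Pi; exfalso.
by apply: noP; exists i.+1; first exact: leqW.
Qed.

Lemma contract_strategy_GFG : GFG contract.
Proof.
exists g; split=> //; split; first exact: contract_strategy_delta.
by move=> w /contract_accepts; apply: contract_strategy_accepting.
Qed.

Lemma contract_strategy_complete w : accepts A w -> accepts contract w.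
Proof.
move=> Aw; exists (fun i => g (Defs.prefix w i)).
split; last exact: contract_strategy_accepting.
by split=> // i; rewrite prefixS; apply: contract_strategy_delta.
Qed.

End Strategy.

Lemma minimal_contract_set0 : GFG A -> minimal_GFG A -> R = set0.
Proof.
move=> [f [f0 [fS f_acc]]] minA; apply: cards0_eq.
have C_lang : same_lang contract A.
  move=> w; split; first exact: contract_accepts.
  exact: (contract_strategy_complete f0 fS f_acc).
have := minA _ (contract_strategy_GFG f0 fS f_acc) C_lang.
by rewrite -contract_card -{2}[#|st contract|]addn0 leq_add2l leqn0 => /eqP.
Qed.

End Contraction.

Section Minimal.
Context {Sigma : finType}.
Variable A : tNCW Sigma.
Hypotheses (sdA : semantically_deterministic A) (safedA : safe_deterministic A)
  (gA : GFG A) (minA : minimal_GFG A).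

Lemma minimal_strong_equiv_eq (q p : st A) : strong_equiv q p -> q = p.
Proof.
move=> [qp [_ pq]]; case: (eqVneq q p) => // neq.
have p_notin x : x \in [set q] -> p \notin [set q] by move=> _; rewrite inE eq_sym.
have subsafe_p x : x \in [set q] -> subsafe x p by move/set1P ->.
have entry r x a :
    r \notin [set q] -> x \in [set q] -> safe_trans r a x -> safe_incl p x.
  by move=> _ /set1P ->.
have /setP/(_ q) := minimal_contract_set0 sdA safedA p_notin subsafe_p entry gA minA.
by rewrite !inE eqxx.
Qed.

Lemma minimal_subsafe_connect (q s : st A) : normal A ->
  subsafe q s -> connect (safe_rel A) q s.
Proof.
move=> normA qs; apply: contrapT => not_qs.
pose R := [set x | connect (safe_rel A) q x].
have leave_R x : exists s', x \in R -> subsafe x s' /\ s' \notin R.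
  case: (boolP (x \in R)) => [|_]; last by exists x.
  rewrite inE => /(connect_safe_read safedA) [u qx].
  have [s' ss' xs'] := subsafe_read sdA sdA qs qx; exists s' => _; split => //.
  apply/negP; rewrite inE => qs'; apply: not_qs; apply: connect_trans qs' _.
  exact/normA/(safe_read_connect ss').
have [y yP] := choice leave_R.
have y_notin x : x \in R -> y x \notin R by case/yP.
have subsafe_y x : x \in R -> subsafe x (y x) by case/yP.
have entry r x a : r \notin R -> x \in R -> safe_trans r a x -> safe_incl (y x) x.
  rewrite !inE => /negP not_qr qx rx; exfalso; apply: not_qr.
  by apply: connect_trans qx (normA _ _ (connect1 _)); apply/existsP; exists a.
have /setP/(_ q) := minimal_contract_set0 sdA safedA y_notin subsafe_y entry gA minA.
by rewrite !inE connect0.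
Qed.

End Minimal.

Section LimitWord.
Variables (T : Type) (x0 : T) (U : nat -> seq T).
Hypotheses (U_ext : forall k, exists t, U k.+1 = U k ++ t)
  (U_size : forall k, k <= size (U k)).

(* The default [x0] is never used, since [n < size (U n.+1)]. *)
Definition limit_word n := nth x0 (U n.+1) n.

Lemma chain_prefix k m : k <= m -> exists t, U m = U k ++ t.
Proof.
elim: m => [|m IH]; first by rewrite leqn0 => /eqP ->; exists [::]; rewrite cats0.
rewrite leq_eqVlt => /predU1P [->|/IH [t Ut]]; first by exists [::]; rewrite cats0.
by have [t' ->] := U_ext m; exists (t ++ t'); rewrite Ut catA.
Qed.

Lemma nth_chain i k m : i < size (U k) -> i < size (U m) ->
  nth x0 (U k) i = nth x0 (U m) i.
Proof.
wlog km : k m / k <= m => [wlog_km|ik _].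
  by case: (leqP k m) => [|/ltnW] /wlog_km H *; [apply: H | symmetry; apply: H].
by have [t ->] := chain_prefix km; rewrite nth_cat ik.
Qed.

Lemma mkseq_limit_word m n k : m + n <= size (U k) ->
  mkseq (fun i => limit_word (m + i)) n = take n (drop m (U k)).
Proof.
move=> mnk; apply: (@eq_from_nth _ x0).
  rewrite size_mkseq size_take_min size_drop; apply/esym/minn_idPl.
  by rewrite leq_subRL // (leq_trans (leq_addr n m) mnk).
move=> i; rewrite size_mkseq => i_n; rewrite nth_mkseq // nth_take // nth_drop.
by apply: nth_chain; [apply: U_size | apply: leq_trans mnk; rewrite ltn_add2l].
Qed.

End LimitWord.

Section Cover.
Context {Sigma : finType}.
Local Notation word := (@word Sigma).
Variables A B : tNCW Sigma.
Hypotheses (sdA : semantically_deterministic A) (sdB : semantically_deterministic B)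
  (safedA : safe_deterministic A) (safedB : safe_deterministic B)
  (normA : normal A) (AB : same_lang A B).
Variable f : seq Sigma -> st B.
Hypotheses (f0 : f [::] = init B) (fS : forall u a, f (rcons u a) \in delta (f u) a)
  (f_acc : forall w, accepts B w -> run_accepting B w (fun i => f (Defs.prefix w i))).
Variables (q : st A) (u0 : seq Sigma).
Hypotheses (u0q : reads (init A) u0 q) (uncovered : forall s : st B, ~ subsafe q s).

Definition escape P (vz : seq Sigma * seq Sigma) :=
  safe_read q (vz.1 ++ vz.2) = Some q /\ safe_read (f (u0 ++ P)) vz.1 = None.

Lemma escape_exists P : exists vz, safe_read q P = Some q -> escape P vz.
Proof.
case: (safe_read q P =P Some q) => [qP|not_qP]; last by exists ([::], [::]).
have lang_qf : lang_eq q (f (u0 ++ P)).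
  apply: (lang_eq_reads sdA sdB AB _ (strategy_reads f0 fS _)).
  by apply/reads_cat; exists q => //; apply: safe_read_reads.
have [v [qv fv]] : exists v, safe_read q v != None /\ safe_read (f (u0 ++ P)) v = None.
  apply: contrapT => no_v; apply: (@uncovered (f (u0 ++ P))); split => // v qv.
  by apply/eqP => fv; apply: no_v; exists v.
case Eqv: (safe_read q v) qv => [x|] // _.
have /(connect_safe_read safedA) [z xz] := normA (safe_read_connect Eqv).
by exists (v, z) => _; rewrite /escape /= safe_read_cat Eqv.
Qed.

Variable ext : seq Sigma -> seq Sigma * seq Sigma.
Hypothesis extP : forall P, safe_read q P = Some q -> escape P (ext P).

Definition loops k := iter k (fun P => P ++ (ext P).1 ++ (ext P).2) [::].

Lemma loops_closed k : safe_read q (loops k) = Some q.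
Proof. by elim: k => // k IH; rewrite /= safe_read_cat IH; case: (extP IH). Qed.

Lemma escape_nonempty k : 0 < size (ext (loops k)).1.
Proof. by case: (extP (loops_closed k)); case: (ext _).1. Qed.

Lemma loops_size k : k <= size (loops k).
Proof.
elim: k => // k IH; rewrite /= !size_cat -addn1 leq_add //.
exact: leq_trans (escape_nonempty k) (leq_addr _ _).
Qed.

Definition escape_chain k := u0 ++ loops k.

Lemma escape_chain_succ k :
  escape_chain k.+1 = escape_chain k ++ (ext (loops k)).1 ++ (ext (loops k)).2.
Proof. by rewrite /escape_chain /= catA. Qed.

Lemma escape_chain_ext k : exists t, escape_chain k.+1 = escape_chain k ++ t.
Proof. by eexists; apply: escape_chain_succ. Qed.

Lemma escape_chain_size k : k <= size (escape_chain k).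
Proof. by rewrite size_cat (leq_trans (loops_size k) (leq_addl _ _)). Qed.

Variable a0 : Sigma.

Definition escape_word : word := limit_word a0 escape_chain.

Lemma prefix_escape_word m n k : m + n <= size (escape_chain k) ->
  Defs.prefix (wdrop m escape_word) n = take n (drop m (escape_chain k)).
Proof. exact: (mkseq_limit_word a0 escape_chain_ext escape_chain_size). Qed.

Lemma prefix_escape_chain k :
  Defs.prefix escape_word (size (escape_chain k)) = escape_chain k.
Proof.
rewrite -[escape_word]/(wdrop 0 escape_word) (prefix_escape_word (k := k)).
  by rewrite drop0 take_size.
by rewrite add0n.
Qed.

Lemma escape_word_accepted : accepts A escape_word.
Proof.
apply: (accepts_prefix_reads (y := q) (m := size u0)).
  by move: (prefix_escape_chain 0); rewrite /escape_chain /= cats0 => ->.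
apply: safe_read_accepts => n.
rewrite (prefix_escape_word (k := n)) ?drop_size_cat //; last first.
  by rewrite size_cat leq_add2l loops_size.
by apply: (safe_read_catl (v := drop n (loops n))); rewrite cat_take_drop loops_closed.
Qed.

Lemma escape_function_absurd : False.
Proof.
pose run i := f (Defs.prefix escape_word i).
have run_step i : run i.+1 \in delta (run i) (escape_word i) by rewrite /run prefixS.
have [N fsafe] := run_safe_from run_step (f_acc ((AB _).1 escape_word_accepted)).
set m := size (escape_chain N); set v := (ext (loops N)).1.
have msafe i : m <= i -> safe_trans (run i) (escape_word i) (run i.+1).
  by move=> mi; apply/fsafe/(leq_trans (escape_chain_size N) mi).
have := safe_run_read safedB msafe (size v).
rewrite /run prefix_escape_chain (prefix_escape_word (k := N.+1)); last first.
  by rewrite escape_chain_succ size_cat leq_add2l size_cat leq_addr.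
rewrite escape_chain_succ drop_size_cat // take_size_cat //.
by case: (extP (loops_closed N)) => _ ->.
Qed.

End Cover.

Lemma subsafe_cover {Sigma : finType} (A B : tNCW Sigma) :
  semantically_deterministic A -> semantically_deterministic B ->
  safe_deterministic A -> safe_deterministic B -> normal A -> all_reachable A ->
  GFG B -> same_lang A B -> forall q : st A, exists s : st B, subsafe q s.
Proof.
move=> sdA sdB safedA safedB normA reachA [f [f0 [fS f_acc]]] AB q.
apply: contrapT => /forallNP uncovered.
have [u0 u0q] := connect_reads (reachA q).
have [ext extP] := choice (escape_exists sdA sdB safedA normA AB f0 fS u0q uncovered).
have [a0 _] : exists a0 : Sigma, True.
  by move: (escape_nonempty extP 0); case: (ext _).1 => // a0; exists a0.
exact: (escape_function_absurd safedB AB fS f_acc u0q extP a0).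
Qed.

Lemma iter_periodic (T : finType) (h : T -> T) x :
  exists i, exists2 j, 0 < j & iter j h (iter i h x) = iter i h x.
Proof.
have /trajectP [i i_lt cycle] := looping_order h x.
by exists i, (order h x - i); rewrite ?subn_gt0 // -iterD subnK ?(ltnW i_lt).
Qed.

Lemma strong_equiv_exists {Sigma : finType} (A B : tNCW Sigma) :
  semantically_deterministic A -> semantically_deterministic B ->
  safe_deterministic A -> normal A ->
  (forall q s : st A, subsafe q s -> connect (safe_rel A) q s) ->
  (forall q : st A, exists s : st B, subsafe q s) ->
  (forall s : st B, exists q : st A, subsafe s q) ->
  forall q : st A, exists s : st B, strong_equiv q s.
Proof.
move=> sdA sdB safedA normA centralA coverAB coverBA q.
have [phi phiP] := choice coverAB; have [psi psiP] := choice coverBA.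
pose h x := psi (phi x).
have hP x : subsafe x (h x) by apply: subsafe_trans (phiP x) (psiP _).
have iter_hP n x : subsafe x (iter n h x).
  by elim: n => [|n IH]; [apply: subsafe_refl | apply: subsafe_trans IH (hP _)].
have [i [j j_gt0 cycle]] := iter_periodic h q; set x := iter i h q in cycle.
have phi_x : subsafe (phi x) x.
  apply: subsafe_trans (psiP (phi x)) _.
  by have := iter_hP j.-1 (h x); rewrite -iterSr prednK // cycle.
have /normA /(connect_safe_read safedA) [u xq] := centralA _ _ (iter_hP i q).
have [s xs qs] := subsafe_read sdA sdB (phiP x) xq.
have [q' xq' sq'] := subsafe_read sdB sdA phi_x xs.
by move: xq'; rewrite xq => -[q'E]; subst q'; exists s.
Qed.

Section Isomorphism.
Context {Sigma : finType}.
Variables (A B : tNCW Sigma) (k : st A -> st B).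
Hypotheses (eqA : forall x y : st A, strong_equiv x y -> x = y)
  (eqB : forall x y : st B, strong_equiv x y -> x = y)
  (kP : forall q, strong_equiv q (k q)).

Lemma strong_equiv_inj : injective k.
Proof.
move=> x y kxy; apply: eqA; apply: strong_equiv_trans (kP x) _.
by rewrite kxy; apply/strong_equiv_sym/kP.
Qed.

Lemma strong_equiv_safe_respecting :
  semantically_deterministic A -> semantically_deterministic B ->
  safe_deterministic A -> safe_deterministic B -> safe_respecting k.
Proof.
move=> sdA sdB safedA safedB q q' a; apply/idP/idP => safe.
  have [s Es q's] := strong_equiv_succ sdA sdB (kP q) (safe_trans_succ safedA safe).
  have -> : k q' = s.
    exact: eqB (strong_equiv_trans (strong_equiv_sym (kP q')) q's).
  exact: safe_succ_trans.
have [p Ep kq'p] :=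
  strong_equiv_succ sdB sdA (strong_equiv_sym (kP q)) (safe_trans_succ safedB safe).
have -> : q' = p by apply: eqA (strong_equiv_trans (kP q') kq'p).
exact: safe_succ_trans.
Qed.

End Isomorphism.

Unset Implicit Arguments.

Theorem mainTheorem2 (Sigma : finType) (A B : tNCW Sigma) :
  GFG A -> GFG B -> nice A -> nice B ->
  same_lang A B ->
  minimal_GFG A -> minimal_GFG B ->
  safe_isomorphic A B.
Proof.
move=> gA gB [reachA _ normA safedA sdA] [reachB _ normB safedB sdB] AB minA minB.
have BA : same_lang B A by move=> w; rewrite AB.
have eqA := minimal_strong_equiv_eq sdA safedA gA minA.
have eqB := minimal_strong_equiv_eq sdB safedB gB minB.
have coverAB := subsafe_cover sdA sdB safedA safedB normA reachA gB AB.
have coverBA := subsafe_cover sdB sdA safedB safedA normB reachB gA BA.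
have centralA q s := @minimal_subsafe_connect _ _ sdA safedA gA minA q s normA.
have [k kP] :=
  choice (strong_equiv_exists sdA sdB safedA normA centralA coverAB coverBA).
exists k; split; first exact: inj_card_bij (strong_equiv_inj eqA kP) (minB _ gA AB).
exact: strong_equiv_safe_respecting.
Qed.
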